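(* For every real $x>1/4$, $$\sum_{k=0}^\infty\frac1{x^{2k}\binom{4k}{2k}}=\frac{16x^2}{16x^2-1}+2x\left(\frac{\operatorname{arccot}\sqrt{4x-1}}{(4x-1)\sqrt{4x-1}}-\frac{\operatorname{arccoth}\sqrt{4x+1}}{(4x+1)\sqrt{4x+1}}\right).$$
   Context: For $y>0$, $\operatorname{arccot}y=\arctan(1/y)$; for $y>1$, $\operatorname{arccoth}y=\operatorname{arctanh}(1/y)=\frac12\log\frac{y+1}{y-1}$. *)

From Stdlib Require Import Reals.
From Coquelicot Require Export Coquelicot.
Open Scope R_scope.

Definition arccot (y : R) : R := atan (/ y).

(* arccoth y = arctanh (1/y) = (1/2) log ((y+1)/(y-1)), used for y > 1 *)
Definition arccoth (y : R) : R := / 2 * ln ((y + 1) / (y - 1)).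

From Stdlib Require Import Reals Lra Lia Factorial.
From Coquelicot Require Import Coquelicot.
Open Scope R_scope.

(* The Wallis integral [int_{-1}^{1} (1 - s^2)^m ds = 2 4^m m!^2 / (2m+1)!]
   turns the k-th term into [1/2 int_{-1}^{1} (4k+1) z(s)^k ds] with
   [z(s) = ((1 - s^2) / (4x))^2], which ranges over [[0, q]], [q = 1/(16x^2) < 1].
   Summing under the integral gives the integrand [(1+3z)/(1-z)^2]; since
   [16x^2 (1 - z) = (s^2 + 4x - 1)(4x + 1 - s^2)], it splits into partial
   fractions with an elementary primitive built from [atan] and [ln], whose
   boundary values give the closed form.  The tail of [sum (4k+1) z^k] is
   bounded uniformly by [(4N+5) q^(N+1) / (1-q)^2], which justifies the
   interchange of sum and integral. *)

Lemma is_RInt_sum_n {V : NormedModule R_AbsRing} (f : nat -> R -> V) (I : nat -> V) a b N :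
  (forall k, is_RInt (f k) a b (I k)) ->
  is_RInt (fun s => sum_n (fun k => f k s) N) a b (sum_n I N).
Proof.
  intros hf. induction N as [|N IH].
  - rewrite sum_O. apply is_RInt_ext with (f 0%nat); [| apply hf].
    intros s _. now rewrite sum_O.
  - rewrite sum_Sn. apply is_RInt_ext with (fun s => plus (sum_n (fun k => f k s) N) (f (S N) s)).
    + intros s _. now rewrite sum_Sn.
    + now apply is_RInt_plus.
Qed.

Lemma is_RInt_dist_le (f g : R -> R) (a b If Ig M : R) : a <= b ->
  is_RInt f a b If -> is_RInt g a b Ig ->
  (forall s, a <= s <= b -> Rabs (f s - g s) <= M) -> Rabs (If - Ig) <= (b - a) * M.
Proof.
  intros hab hf hg hM.
  exact (norm_RInt_le_const (fun s => f s - g s) a b (If - Ig) M hab hM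
           (is_RInt_minus _ _ _ _ _ _ hf hg)).
Qed.

Lemma is_lim_seq_of_dist_le (u e : nat -> R) (l : R) :
  is_lim_seq e 0 -> (forall n, Rabs (l - u n) <= e n) -> is_lim_seq u l.
Proof.
  intros he hd.
  apply is_lim_seq_le_le with (fun n => l - e n) (fun n => l + e n).
  - intros n. specialize (hd n). apply Rabs_le_between in hd. lra.
  - replace (Finite l) with (Rbar_minus l 0) by (simpl; f_equal; ring).
    apply is_lim_seq_minus'; [apply is_lim_seq_const | exact he].
  - replace (Finite l) with (Rbar_plus l 0) by (simpl; f_equal; ring).
    apply is_lim_seq_plus'; [apply is_lim_seq_const | exact he].
Qed.

Lemma inv_sqr_bounds y : 1 < y -> 0 < (/ y) ^ 2 < 1.
Proof.
  intros hy.
  assert (0 < / y) by (apply Rinv_0_lt_compat; lra).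
  assert (/ y < 1) by (rewrite <- Rinv_1; apply Rinv_1_lt_contravar; lra).
  simpl; split; nra.
Qed.

Definition wallis (m : nat) : R :=
  2 * 4 ^ m * INR (fact m) ^ 2 / INR (fact (2 * m + 1)).

Lemma wallis_S m : wallis (S m) = 2 * INR (S m) / (2 * INR m + 3) * wallis m.
Proof.
  unfold wallis.
  replace (2 * S m + 1)%nat with (S (S (2 * m + 1))) by lia.
  rewrite !fact_simpl, !mult_INR, !S_INR, plus_INR, mult_INR.
  assert (H1 := INR_fact_neq_0 m). assert (H2 := INR_fact_neq_0 (2 * m + 1)).
  assert (0 <= INR m) by apply pos_INR.
  simpl (INR 2). simpl (INR 1). change (4 ^ S m) with (4 * 4 ^ m).
  field. repeat split; lra.
Qed.

(* [s (1 - s^2)^(m+1)] vanishes at [-1] and [1] and has this derivative. *)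
Lemma is_RInt_wallis_recurrence m :
  is_RInt (fun s => (2 * INR m + 3) * (1 - s ^ 2) ^ S m - 2 * INR (S m) * (1 - s ^ 2) ^ m)
    (-1) 1 0.
Proof.
  set (P := fun s => s * (1 - s ^ 2) ^ S m).
  replace 0 with (minus (P 1) (P (-1)))
    by (unfold P, minus, plus, opp; simpl; ring).
  apply (is_RInt_derive P).
  - intros s _. unfold P. auto_derive; [easy |].
    change (match m with 0%nat => 1 | S _ => INR m + 1 end) with (INR (S m)).
    replace (1 + - (s * (s * 1))) with (1 - s ^ 2) by ring.
    rewrite S_INR. cbn [pow]. ring.
  - intros s _. apply (@ex_derive_continuous R_AbsRing R_NormedModule).
    auto_derive. easy.
Qed.

Lemma is_RInt_wallis m : is_RInt (fun s => (1 - s ^ 2) ^ m) (-1) 1 (wallis m).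
Proof.
  induction m as [|m IH].
  - apply is_RInt_ext with (fun _ => 1); [intros; simpl; ring |].
    replace (wallis 0) with (scal (1 - -1) 1)
      by (unfold wallis, scal; simpl; unfold mult; simpl; field).
    exact (@is_RInt_const R_NormedModule (-1) 1 1).
  - assert (0 <= INR m) by apply pos_INR.
    rewrite wallis_S.
    replace (2 * INR (S m) / (2 * INR m + 3) * wallis m)
      with (/ (2 * INR m + 3) * (0 + 2 * INR (S m) * wallis m)) by (field; lra).
    apply is_RInt_ext with (fun s => / (2 * INR m + 3) *
      (((2 * INR m + 3) * (1 - s ^ 2) ^ S m - 2 * INR (S m) * (1 - s ^ 2) ^ m)
       + 2 * INR (S m) * (1 - s ^ 2) ^ m)).
    + intros s _. change (?u = ?v) with (u = v :> R). field. lra.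
    + apply (is_RInt_scal (V := R_NormedModule)), (is_RInt_plus (V := R_NormedModule));
        [apply is_RInt_wallis_recurrence |].
      apply (is_RInt_scal (V := R_NormedModule)), IH.
Qed.

Lemma inv_central_binom_wallis (y : R) m : y <> 0 ->
  / (y ^ m * Binomial.C (2 * m) m) = (2 * INR m + 1) / (2 * (4 * y) ^ m) * wallis m.
Proof.
  intros hy. unfold wallis, Binomial.C.
  replace (2 * m - m)%nat with m by lia.
  replace (2 * m + 1)%nat with (S (2 * m)) by lia.
  rewrite fact_simpl, mult_INR, S_INR, mult_INR, Rpow_mult_distr.
  assert (H1 := INR_fact_neq_0 m). assert (H2 := INR_fact_neq_0 (2 * m)).
  assert (0 <= INR m) by apply pos_INR. simpl (INR 2).
  assert (y ^ m <> 0) by (apply pow_nonzero; auto).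
  assert (4 ^ m <> 0) by (apply pow_nonzero; lra).
  field. repeat split; auto; lra.
Qed.

Definition term (x : R) (k : nat) : R := / (x ^ (2 * k) * Binomial.C (4 * k) (2 * k)).

Definition zeta (x s : R) : R := ((1 - s ^ 2) / (4 * x)) ^ 2.

Lemma zeta_bounds x s : 0 < x -> -1 <= s <= 1 -> 0 <= zeta x s <= (/ (4 * x)) ^ 2.
Proof.
  intros hx hs. unfold zeta, Rdiv.
  assert (0 <= 1 - s ^ 2 <= 1) by (simpl; nra).
  assert (0 < / (4 * x)) by (apply Rinv_0_lt_compat; lra).
  split; [apply pow2_ge_0 |].
  apply pow_incr. split; [apply Rmult_le_pos |]; nra.
Qed.

Lemma is_RInt_term x k : x <> 0 ->
  is_RInt (fun s => / 2 * ((4 * INR k + 1) * zeta x s ^ k)) (-1) 1 (term x k).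
Proof.
  intros hx. unfold term.
  replace (4 * k)%nat with (2 * (2 * k))%nat by lia.
  rewrite inv_central_binom_wallis by exact hx.
  eapply (is_RInt_ext (V := R_NormedModule));
    [| apply (is_RInt_scal _ _ _ _ _ (is_RInt_wallis (2 * k)))].
  intros s _. change (scal ?a ?b) with (a * b).
  unfold zeta, Rdiv. rewrite <- pow_mult, (Rpow_mult_distr (1 - s ^ 2)), pow_inv, mult_INR.
  assert ((4 * x) ^ (2 * k) <> 0) by (apply pow_nonzero; lra).
  simpl (INR 2). change (?u = ?v) with (u = v :> R). field. exact H.
Qed.

Lemma linear_geom_remainder z N : z <> 1 ->
  (1 + 3 * z) / (1 - z) ^ 2 - sum_n (fun k => (4 * INR k + 1) * z ^ k) N
  = z ^ S N * (4 * INR N + 5 - (4 * INR N + 1) * z) / (1 - z) ^ 2.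
Proof.
  intros hz. assert (1 - z <> 0) by lra.
  induction N as [|N IH].
  - rewrite sum_O. simpl. field. exact H.
  - rewrite sum_Sn. change (plus ?a ?b) with (a + b).
    replace ((1 + 3 * z) / (1 - z) ^ 2 - (sum_n (fun k => (4 * INR k + 1) * z ^ k) N
               + (4 * INR (S N) + 1) * z ^ S N))
      with (((1 + 3 * z) / (1 - z) ^ 2 - sum_n (fun k => (4 * INR k + 1) * z ^ k) N)
            - (4 * INR (S N) + 1) * z ^ S N) by ring.
    rewrite IH, S_INR. cbn [pow]. field. exact H.
Qed.

Lemma linear_geom_remainder_le z q N : 0 <= z <= q -> q < 1 ->
  Rabs ((1 + 3 * z) / (1 - z) ^ 2 - sum_n (fun k => (4 * INR k + 1) * z ^ k) N)
  <= (4 * INR N + 5) * q ^ S N / (1 - q) ^ 2.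
Proof.
  intros hz hq. rewrite linear_geom_remainder by lra.
  assert (0 <= INR N) by apply pos_INR.
  assert (Hpow : 0 <= z ^ S N <= q ^ S N) by (split; [apply pow_le | apply pow_incr]; lra).
  assert (Hfac : 0 <= 4 * INR N + 5 - (4 * INR N + 1) * z <= 4 * INR N + 5) by nra.
  assert (Hq2 : 0 < (1 - q) ^ 2) by (simpl; nra).
  assert (Hinv : / (1 - z) ^ 2 <= / (1 - q) ^ 2)
    by (apply Rinv_le_contravar; [| simpl]; nra).
  assert (0 < / (1 - z) ^ 2) by (apply Rinv_0_lt_compat; simpl; nra).
  unfold Rdiv. rewrite Rabs_pos_eq by (apply Rmult_le_pos; [apply Rmult_le_pos |]; lra).
  rewrite (Rmult_comm (4 * INR N + 5)).
  apply Rmult_le_compat; [apply Rmult_le_pos | | apply Rmult_le_compat |]; lra.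
Qed.

Lemma is_lim_seq_linear_geom q : 0 < q < 1 ->
  is_lim_seq (fun N => (4 * INR N + 5) * q ^ S N) 0.
Proof.
  intros hq. set (c := fun N => (4 * INR N + 5) * q ^ S N).
  assert (Hc : forall n, c n <> 0).
  { intros n. unfold c. assert (0 <= INR n) by apply pos_INR.
    apply Rmult_integral_contrapositive; split; [lra | apply pow_nonzero; lra]. }
  assert (Hinv : is_lim_seq (fun n => / (4 * INR n + 5)) 0).
  { replace (Finite 0) with (Rbar_inv p_infty) by reflexivity.
    apply is_lim_seq_inv; [| discriminate].
    apply is_lim_seq_le_p_loc with INR; [| apply is_lim_seq_INR].
    exists 0%nat. intros n _. assert (0 <= INR n) by apply pos_INR. lra. }
  assert (Hratio : is_lim_seq (fun n => Rabs (c (S n) / c n)) q).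
  { apply is_lim_seq_ext with (fun n => q * (1 + 4 * / (4 * INR n + 5))).
    - intros n. unfold c. rewrite S_INR. assert (0 <= INR n) by apply pos_INR.
      assert (0 < q ^ n) by (apply pow_lt; lra).
      rewrite Rabs_pos_eq.
      + cbn [pow]. field. repeat split; nra.
      + apply Rlt_le, Rdiv_lt_0_compat; apply Rmult_lt_0_compat; try lra; apply pow_lt; lra.
    - replace (Finite q) with (Finite (q * (1 + 4 * 0))) by (f_equal; ring).
      apply is_lim_seq_mult', is_lim_seq_plus', is_lim_seq_mult';
        try apply is_lim_seq_const. exact Hinv. }
  apply is_lim_seq_abs_0, ex_series_lim_0.
  exact (ex_series_DAlembert c q (proj2 hq) Hc Hratio).
Qed.

Definition pfrac (x a b s : R) : R :=
  16 * x ^ 2 / (s ^ 2 + a ^ 2) ^ 2 + 16 * x ^ 2 / (b ^ 2 - s ^ 2) ^ 2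
  - 2 * x / (s ^ 2 + a ^ 2) - 2 * x / (b ^ 2 - s ^ 2).

Definition pfrac_prim (x a b s : R) : R :=
  16 * x ^ 2 * (s / (s ^ 2 + a ^ 2) / (2 * a ^ 2) + atan (s / a) / (2 * a ^ 3))
  + 16 * x ^ 2 * (s / (b ^ 2 - s ^ 2) / (2 * b ^ 2) + (ln (b + s) - ln (b - s)) / (4 * b ^ 3))
  - 2 * x * atan (s / a) / a - x * (ln (b + s) - ln (b - s)) / b.

Lemma is_derive_pfrac_prim x a b s : 0 < a -> Rabs s < b ->
  is_derive (pfrac_prim x a b) s (pfrac x a b s).
Proof.
  intros ha hs. apply Rabs_def2 in hs. unfold pfrac_prim.
  auto_derive.
  - repeat split; nra.
  - unfold pfrac. field. repeat split; nra.
Qed.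

Lemma is_RInt_pfrac x a b : 0 < a -> 1 < b ->
  is_RInt (pfrac x a b) (-1) 1 (pfrac_prim x a b 1 - pfrac_prim x a b (-1)).
Proof.
  intros ha hb. apply (is_RInt_derive (pfrac_prim x a b)).
  - intros s hs. rewrite Rmin_left, Rmax_right in hs by lra.
    apply is_derive_pfrac_prim; [exact ha | apply Rabs_def1; lra].
  - intros s hs. rewrite Rmin_left, Rmax_right in hs by lra.
    apply (@ex_derive_continuous R_AbsRing R_NormedModule).
    assert (s * s <= 1) by nra. assert (1 < b * b) by nra. assert (0 < a * a) by nra.
    unfold pfrac. auto_derive. repeat split; nra.
Qed.

Definition rhs (x : R) : R :=
  16 * x ^ 2 / (16 * x ^ 2 - 1)
  + 2 * x * (arccot (sqrt (4 * x - 1)) / ((4 * x - 1) * sqrt (4 * x - 1))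
             - arccoth (sqrt (4 * x + 1)) / ((4 * x + 1) * sqrt (4 * x + 1))).

Lemma pfrac_prim_boundary x : / 4 < x ->
  pfrac_prim x (sqrt (4 * x - 1)) (sqrt (4 * x + 1)) 1
  - pfrac_prim x (sqrt (4 * x - 1)) (sqrt (4 * x + 1)) (-1) = 2 * rhs x.
Proof.
  intros hx.
  assert (Ha : 0 < sqrt (4 * x - 1)) by (apply sqrt_lt_R0; lra).
  assert (Hb : 1 < sqrt (4 * x + 1)) by (rewrite <- sqrt_1 at 1; apply sqrt_lt_1; lra).
  assert (Ea := sqrt_sqrt (4 * x - 1) ltac:(lra)).
  assert (Eb := sqrt_sqrt (4 * x + 1) ltac:(lra)).
  unfold pfrac_prim, rhs, arccot, arccoth.
  set (a := sqrt (4 * x - 1)) in *. set (b := sqrt (4 * x + 1)) in *.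
  replace (-1 / a) with (- / a) by (field; lra).
  replace (1 / a) with (/ a) by (field; lra).
  rewrite atan_opp.
  replace (b + -1) with (b - 1) by ring. replace (b - -1) with (b + 1) by ring.
  rewrite ln_div by lra.
  replace (a ^ 3) with ((4 * x - 1) * a) by (rewrite <- Ea; ring).
  replace (b ^ 3) with ((4 * x + 1) * b) by (rewrite <- Eb; ring).
  replace (a ^ 2) with (4 * x - 1) by (simpl; lra).
  replace (b ^ 2) with (4 * x + 1) by (simpl; lra).
  field. repeat split; nra.
Qed.

Lemma pfrac_zeta x s : / 4 < x -> -1 <= s <= 1 ->
  pfrac x (sqrt (4 * x - 1)) (sqrt (4 * x + 1)) s
  = (1 + 3 * zeta x s) / (1 - zeta x s) ^ 2.
Proof.
  intros hx hs. assert (0 <= 1 - s ^ 2 <= 1) by (simpl; nra).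
  unfold pfrac, zeta.
  replace (sqrt (4 * x - 1) ^ 2) with (4 * x - 1) by (simpl; rewrite Rmult_1_r, sqrt_sqrt; lra).
  replace (sqrt (4 * x + 1) ^ 2) with (4 * x + 1) by (simpl; rewrite Rmult_1_r, sqrt_sqrt; lra).
  simpl. field. repeat split; nra.
Qed.

Lemma is_RInt_rhs x : / 4 < x ->
  is_RInt (fun s => / 2 * ((1 + 3 * zeta x s) / (1 - zeta x s) ^ 2)) (-1) 1 (rhs x).
Proof.
  intros hx.
  assert (Ha : 0 < sqrt (4 * x - 1)) by (apply sqrt_lt_R0; lra).
  assert (Hb : 1 < sqrt (4 * x + 1)) by (rewrite <- sqrt_1 at 1; apply sqrt_lt_1; lra).
  assert (H := is_RInt_scal _ _ _ (/ 2) _ (is_RInt_pfrac x _ _ Ha Hb)).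
  rewrite pfrac_prim_boundary in H by exact hx.
  change (scal (/ 2) (2 * rhs x)) with (/ 2 * (2 * rhs x)) in H.
  replace (/ 2 * (2 * rhs x)) with (rhs x) in H by field.
  refine (is_RInt_ext _ _ _ _ _ _ H).
  intros s hs. rewrite Rmin_left, Rmax_right in hs by lra.
  rewrite <- pfrac_zeta by lra. reflexivity.
Qed.

Lemma rhs_minus_partial_sum x N : / 4 < x ->
  Rabs (rhs x - sum_n (term x) N)
  <= (4 * INR N + 5) * ((/ (4 * x)) ^ 2) ^ S N / (1 - (/ (4 * x)) ^ 2) ^ 2.
Proof.
  intros hx. set (q := (/ (4 * x)) ^ 2).
  assert (hq : 0 < q < 1) by exact (inv_sqr_bounds (4 * x) ltac:(lra)).
  apply Rle_trans with ((1 - -1) * (/ 2 * ((4 * INR N + 5) * q ^ S N / (1 - q) ^ 2)));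
    [| right; field; lra].
  apply (is_RInt_dist_le (fun s => / 2 * ((1 + 3 * zeta x s) / (1 - zeta x s) ^ 2))
           (fun s => sum_n (fun k => mult (/ 2) ((4 * INR k + 1) * zeta x s ^ k)) N));
    [lra | apply is_RInt_rhs, hx | |].
  - apply (is_RInt_sum_n (V := R_NormedModule)
             (fun k s => mult (/ 2) ((4 * INR k + 1) * zeta x s ^ k))).
    intros k. apply is_RInt_term. lra.
  - intros s hs. rewrite sum_n_mult_l. change mult with Rmult.
    rewrite <- Rmult_minus_distr_l, Rabs_mult, (Rabs_pos_eq (/ 2)) by lra.
    apply Rmult_le_compat_l; [lra |].
    apply linear_geom_remainder_le; [apply zeta_bounds |]; lra.
Qed.

Theorem lemma4p1 (x : R) (hx : / 4 < x) :
  is_series (fun k : nat => / (x ^ (2 * k) * Binomial.C (4 * k) (2 * k)))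
    (16 * x ^ 2 / (16 * x ^ 2 - 1)
     + 2 * x * (arccot (sqrt (4 * x - 1)) / ((4 * x - 1) * sqrt (4 * x - 1))
                - arccoth (sqrt (4 * x + 1)) / ((4 * x + 1) * sqrt (4 * x + 1)))).
Proof.
  set (q := (/ (4 * x)) ^ 2).
  assert (hq : 0 < q < 1) by exact (inv_sqr_bounds (4 * x) ltac:(lra)).
  change (is_lim_seq (sum_n (term x)) (rhs x)).
  apply is_lim_seq_of_dist_le with (fun N => (4 * INR N + 5) * q ^ S N / (1 - q) ^ 2).
  - replace (Finite 0) with (Rbar_mult 0 (/ (1 - q) ^ 2)) by (simpl; f_equal; ring).
    apply is_lim_seq_scal_r, is_lim_seq_linear_geom, hq.
  - intros N. apply rhs_minus_partial_sum, hx.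
Qed.
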